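(* In the setting described in the context, the workload dimension $d$ equals the number $L$ of buffer pools, and the $L\times I$ matrix $M$ with $M_{li}=1$ if $i\in\mathcal P_l$ and $M_{li}=0$ otherwise is a workload matrix.
   Context: Let $I\ge1$, $J\ge I$; each activity $j\in\{1,\dots,J\}$ has a server $s(j)$ and a buffer $b(j)$ in $\{1,\dots,I\}$, with $s(j)=b(j)=j$ for $j\le I$. Let $A_{ij}=\mathbf1\{s(j)=i\}$, $C_{ij}=\mathbf1\{b(j)=i\}$, $\lambda^*\in(0,\infty)^I$, $\mu_j^*=\lambda^*_{s(j)}$, $R_{ij}=\mu_j^*C_{ij}$, $\eta>0$, $q\in(0,1)^I$ with $\sum q_i=1$, $\nu=\eta q$; assume there is a unique $x^*\in\mathbb{R}^J$ with $x^*_j=\min\{\lambda^*_j,\nu_j\}$ for $j\le I$, $Rx^*=\nu$, $Ax^*=e$, $x^*\ge0$. Activity $j$ is basic if $x_j^*>0$; after relabeling the basic activities are $1,\dots,b$, and $H$, $B$ denote the $I\times b$ submatrices of $R$, $A$ formed by their first $b$ columns. Let $\mathcal N=\{Hy:By=0,\ y\in\mathbb{R}^b\}$ and $\mathcal M=\mathcal N^\perp\subseteq\mathbb{R}^I$; the workload dimension is $d=\dim\mathcal M$, and a workload matrix is any $d\times I$ matrix whose rows form a basis of $\mathcal M$. Buffers $i,i'$ communicate directly if there are basic $j,j'$ with $b(j)=i$, $b(j')=i'$, $s(j)=s(j')$; they communicate if linked by a finite chain of directly communicating buffers. The equivalence classes of communication are the buffer pools $\mathcal P_1,\dots,\mathcal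 P_L$. *)

From HB Require Import structures.
From mathcomp Require Import all_boot all_order all_algebra.
Set Implicit Arguments. Unset Strict Implicit. Unset Printing Implicit Defensive.
Import Order.TTheory GRing.Theory Num.Theory.
Local Open Scope ring_scope.

Section Network.
Variables (R : realFieldType) (I J : nat).
Variables (s bf : 'I_J -> 'I_I) (lam : 'I_I -> R).

Definition Amx : 'M[R]_(I, J) := \matrix_(i, j) ((s j == i)%:R).
Definition Cmx : 'M[R]_(I, J) := \matrix_(i, j) ((bf j == i)%:R).
Definition mu (j : 'I_J) : R := lam (s j).
Definition Rmx : 'M[R]_(I, J) := \matrix_(i, j) (mu j * Cmx i j).

Variable x : 'cV[R]_J.  (* the (unique) solution x* *)

Definition basicset : {set 'I_J} := [set j | 0 < x j ord0].

Definition Hmx : 'M[R]_(I, #|basicset|) :=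
  colsub (fun k : 'I_#|basicset| => enum_val k) Rmx.
Definition Bmx : 'M[R]_(I, #|basicset|) :=
  colsub (fun k : 'I_#|basicset| => enum_val k) Amx.

(* rows of Nmx span N = { H y : B y = 0 } (as row vectors (H y)^T) *)
Definition Nmx : 'M[R]_(#|basicset|, I) := kermx (Bmx^T) *m Hmx^T.
(* rows of Mmx span M = N^perp = { w : w . v = 0 for all v in N } *)
Definition Mmx : 'M[R]_I := kermx (Nmx^T).

Definition workload_dim : nat := \rank Mmx.

Definition is_workload_matrix (k : nat) (W : 'M[R]_(k, I)) : Prop :=
  k = workload_dim /\ row_free W /\ (W == Mmx)%MS.

Definition dcomm : rel 'I_I := fun i i' =>
  [exists j, exists j', [&& j \in basicset, j' \in basicset,
     bf j == i, bf j' == i' & s j == s j']].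

Definition comm : rel 'I_I := connect dcomm.

Definition pool_of (i : 'I_I) : {set 'I_I} := [set i' | comm i i'].

End Network.

Definition pool_matrix (R : realFieldType) (I L : nat)
  (P : 'I_L -> {set 'I_I}) : 'M[R]_(L, I) :=
  \matrix_(l, i) ((i \in P l)%:R).

Definition is_xstar (R : realFieldType) (I J : nat) (s bf : 'I_J -> 'I_I)
  (lam nu : 'I_I -> R) (x : 'cV[R]_J) : Prop :=
  [/\ (forall (j : 'I_J) (h : (j < I)%N),
         x j ord0 = Num.min (lam (Ordinal h)) (nu (Ordinal h))),
      Rmx s bf lam *m x = \col_i nu i,
      Amx R s *m x = const_mx 1
    & forall j, 0 <= x j ord0].

From HB Require Import structures.
From mathcomp Require Import all_boot all_order all_algebra.
Set Implicit Arguments. Unset Strict Implicit. Unset Printing Implicit Defensive.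
Import Order.TTheory GRing.Theory Num.Theory.
Local Open Scope ring_scope.

(* A row vector w lies in M iff w H annihilates ker B, where (w H)_j = mu_j w_(b j)
   and column j of B depends only on s(j).  If s(j) = s(j') for basic j, j', then
   e_j - e_j' is in ker B, so mu_j w_(b j) = mu_j' w_(b j'), and mu_j = mu_j' > 0
   forces w_(b j) = w_(b j'): w is constant on buffer pools.  Conversely, if w is
   constant on pools then w H = g B with g_i = lam_i w_(b j) for any basic j served
   by i, so w is in M.  The pool indicators are independent and span exactly the
   vectors constant on pools, hence form a basis of M and d = L. *)

Lemma eq_on_connect (T : finType) (U : Type) (e : rel T) (f : T -> U) :
  (forall i j, e i j -> f i = f j) -> forall i j, connect e i j -> f i = f j.
Proof.
move=> f_e i _ /connectP[p e_p ->].
by elim: p i e_p => //= k p IHp i /andP[/f_e -> /IHp].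
Qed.

Section PartitionMatrix.

Variables (F : realFieldType) (n L : nat) (e : rel 'I_n).
Hypothesis e_sym : connect_sym e.
Variable P : 'I_L -> {set 'I_n}.
Hypotheses (P_inj : injective P)
  (P_class : forall l, exists i, P l = [set j | connect e i j])
  (P_cover : forall i, exists l, P l = [set j | connect e i j]).

Lemma mem_class_connect l i j : connect e i j -> (i \in P l) = (j \in P l).
Proof.
have [k ->] := P_class l; rewrite !inE => e_ij.
exact: same_connect_r e_sym _ _ e_ij k.
Qed.

Lemma class_of_mem l i : i \in P l -> P l = [set j | connect e i j].
Proof.
move=> Pli; apply/setP => j; rewrite inE.
have [k Pl_k] := P_class l.
by move: Pli; rewrite Pl_k !inE => e_ki; rewrite (same_connect e_sym e_ki).
Qed.

Lemma mem_classes_eq l l' i : i \in P l -> i \in P l' -> l = l'.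
Proof. by move=> /class_of_mem Pl /class_of_mem Pl'; apply: P_inj; rewrite Pl Pl'. Qed.

Lemma class_cover i : exists l, i \in P l.
Proof. by have [l Pl] := P_cover i; exists l; rewrite Pl inE connect0. Qed.

Lemma class_nonempty l : exists i, i \in P l.
Proof. by have [i Pl] := P_class l; exists i; rewrite Pl inE connect0. Qed.

Let rep l := xchoose (class_nonempty l).

Let rep_mem l : rep l \in P l.
Proof. exact: xchooseP (class_nonempty l). Qed.

Lemma pool_matrix_row_free : row_free (pool_matrix F P).
Proof.
apply/row_freeP; exists (\matrix_(i, l) (i == rep l)%:R).
apply/matrixP => l l'; rewrite !mxE (bigD1 (rep l')) //= big1 => [|i /negbTE ne_i].
  rewrite !mxE eqxx mulr1 addr0; congr (nat_of_bool _)%:R.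
  apply/idP/eqP => [Pl_rep | ->]; last exact: rep_mem.
  exact: mem_classes_eq Pl_rep (rep_mem l').
by rewrite !mxE ne_i mulr0.
Qed.

Lemma sub_pool_matrixP (u : 'rV[F]_n) :
  (u <= pool_matrix F P)%MS <-> (forall i j, connect e i j -> u 0 i = u 0 j).
Proof.
split=> [/submxP[a ->] i j e_ij | u_const].
  rewrite !mxE; apply: eq_bigr => l _.
  by rewrite !mxE (mem_class_connect l e_ij).
apply/submxP; exists (\row_l u 0 (rep l)); apply/rowP => i; rewrite mxE.
have [l Pli] := class_cover i.
rewrite (bigD1 l) //= big1 => [|l' ne_l'].
  rewrite !mxE Pli mulr1 addr0; apply: u_const.
  by move: (rep_mem l); rewrite (class_of_mem Pli) inE.
rewrite !mxE; case: (boolP (i \in P l')) => [Pl'i|_]; last by rewrite mulr0n mulr0.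
by rewrite (mem_classes_eq Pli Pl'i) eqxx in ne_l'.
Qed.

End PartitionMatrix.

Section WorkloadSpace.

Variables (R : realFieldType) (I J : nat) (s bf : 'I_J -> 'I_I) (lam : 'I_I -> R).
Variable x : 'cV[R]_J.
Hypothesis lam_pos : forall i, 0 < lam i.

Local Notation basic := (basicset x).
Local Notation H := (Hmx s bf lam x).
Local Notation B := (Bmx s x).
Local Notation kerB := (kermx (Bmx s x)^T).

Lemma dcomm_sym : symmetric (dcomm s bf x).
Proof.
move=> i i'; apply/idP/idP => /existsP[j /existsP[j' /and5P[bj bj' bfj bfj' sj]]];
  by apply/existsP; exists j'; apply/existsP; exists j; rewrite bj bj' bfj bfj' eq_sym.
Qed.

Lemma comm_sym : connect_sym (dcomm s bf x).
Proof. exact: sym_connect_sym dcomm_sym. Qed.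

Lemma mulmx_Hmx (u : 'rV[R]_I) k :
  (u *m H) 0 k = u 0 (bf (enum_val k)) * mu s lam (enum_val k).
Proof.
rewrite !mxE (bigD1 (bf (enum_val k))) //= big1 => [|i /negbTE ne_i].
  by rewrite !mxE eqxx mulr1 addr0.
by rewrite !mxE eq_sym ne_i mulr0 mulr0.
Qed.

Lemma mulmx_Bmx (g : 'rV[R]_I) k : (g *m B) 0 k = g 0 (s (enum_val k)).
Proof.
rewrite !mxE (bigD1 (s (enum_val k))) //= big1 => [|i /negbTE ne_i].
  by rewrite !mxE eqxx mulr1 addr0.
by rewrite !mxE eq_sym ne_i mulr0.
Qed.

Lemma sub_Mmx (u : 'rV[R]_I) : (u <= Mmx s bf lam x)%MS = (u *m H *m kerB^T == 0).
Proof. by rewrite sub_kermx /Nmx trmx_mul trmxK mulmxA. Qed.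

Lemma sub_Mmx_dcomm (u : 'rV[R]_I) :
  (u <= Mmx s bf lam x)%MS -> forall i i', dcomm s bf x i i' -> u 0 i = u 0 i'.
Proof.
rewrite sub_Mmx => /eqP uHK _ _ /existsP[j /existsP[j' /and5P[bj bj' /eqP<- /eqP<- /eqP sj]]].
pose k := enum_rank_in bj j; pose k' := enum_rank_in bj j'.
have [jk jk'] : enum_val k = j /\ enum_val k' = j' by rewrite !enum_rankK_in.
pose y : 'cV[R]_#|basic| := delta_mx k 0 - delta_mx k' 0.
have By : B *m y = 0.
  rewrite mulmxBr -!colE; apply/eqP; rewrite subr_eq0; apply/eqP/matrixP => i z.
  by rewrite !mxE jk jk' sj.
have /submxP[a y_ker] : (y^T <= kerB)%MS by rewrite sub_kermx -trmx_mul By trmx0.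
have uHy : (u *m H *m y) 0 0 = 0.
  by rewrite -[y]trmxK y_ker trmx_mul mulmxA uHK mul0mx mxE.
move: (mulmx_Hmx u k) (mulmx_Hmx u k') uHy; move: (u *m H) => w wk wk'.
rewrite mulmxBr -!colE !mxE wk wk' jk jk' /mu sj => /eqP; rewrite subr_eq0 => /eqP.
by apply: mulIf; rewrite gt_eqF.
Qed.

Lemma pool_const_sub_Mmx (u : 'rV[R]_I) :
  (forall i i', comm s bf x i i' -> u 0 i = u 0 i') -> (u <= Mmx s bf lam x)%MS.
Proof.
move=> u_const; rewrite sub_Mmx.
pose g := \row_i (if [pick j in basic | s j == i] is Some j then lam i * u 0 (bf j) else 0).
have B_kerB : B *m kerB^T = 0 by apply: trmx_inj; rewrite trmx_mul trmxK mulmx_ker trmx0.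
suff -> : u *m H = g *m B by rewrite -mulmxA B_kerB mulmx0.
apply/rowP => k; rewrite mulmx_Hmx mulmx_Bmx mxE /mu mulrC.
case: pickP => [j /andP[bj /eqP sj] | /(_ (enum_val k))]; last by rewrite enum_valP eqxx.
congr (_ * _); apply/u_const/connect1/existsP; exists (enum_val k); apply/existsP; exists j.
by rewrite bj enum_valP sj !eqxx.
Qed.

Lemma sub_MmxP (u : 'rV[R]_I) :
  (u <= Mmx s bf lam x)%MS <-> (forall i i', comm s bf x i i' -> u 0 i = u 0 i').
Proof.
split=> [u_M | ]; last exact: pool_const_sub_Mmx.
exact: eq_on_connect (sub_Mmx_dcomm u_M).
Qed.

End WorkloadSpace.

Theorem lemma2 (R : realFieldType) (I J : nat)
  (s bf : 'I_J -> 'I_I) (lam q : 'I_I -> R) (eta : R) (x : 'cV[R]_J)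
  (L : nat) (P : 'I_L -> {set 'I_I}) :
  (1 <= I)%N -> (I <= J)%N ->
  (forall j : 'I_J, (j < I)%N -> nat_of_ord (s j) = j /\ nat_of_ord (bf j) = j) ->
  (forall i, 0 < lam i) ->
  0 < eta ->
  (forall i, 0 < q i < 1) ->
  \sum_i q i = 1 ->
  is_xstar s bf lam (fun i => eta * q i) x ->
  (forall x' : 'cV[R]_J, is_xstar s bf lam (fun i => eta * q i) x' -> x' = x) ->
  (* P_1, ..., P_L is an enumeration of the buffer pools *)
  injective P ->
  (forall l, exists i, P l = pool_of s bf x i) ->
  (forall i, exists l, P l = pool_of s bf x i) ->
  workload_dim s bf lam x = L /\
  is_workload_matrix s bf lam x (pool_matrix R P).
Proof.
move=> _ _ _ lam_pos _ _ _ _ _ P_inj P_pool P_cover.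
have W_pools := sub_pool_matrixP (F := R) (comm_sym s bf x) P_inj P_pool P_cover.
have W_free := pool_matrix_row_free R (comm_sym s bf x) P_inj P_pool.
have W_M : (pool_matrix R P == Mmx s bf lam x)%MS.
  apply/andP; split; apply/row_subP => r.
    by apply/(sub_MmxP s bf x lam_pos)/W_pools/row_sub.
  by apply/W_pools/(sub_MmxP s bf x lam_pos)/row_sub.
have dim_L : workload_dim s bf lam x = L.
  by rewrite /workload_dim -(eqmx_rank W_M); apply/eqP.
split; first exact: dim_L.
by split; [rewrite dim_L | split].
Qed.
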